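(* Under the assumptions of the causal risk ratio identification result (binary $D,M(d),Y(d,m)$; $M=M(D)$, $Y=Y(D,M)$, $Y(d)=Y(d,M(d))$; $Y(d,0)=0$ a.s.; $D$ independent of $(M(d),Y(d,1))$ given $X=x$; $P(D=d\mid X=x)>0$, $P(M=1\mid D=d,X=x)>0$ for $d=0,1$; $\mathbb{E}[Y\mid D=0,M=1,X=x]>0$), suppose also stochastic mediator monotonicity $\mathbb{E}[M(1)\mid X=x]\ge\mathbb{E}[M(0)\mid X=x]$. Then the bias factor $$\left\{\frac{P(D=1\mid M=1,X=x)}{P(D=0\mid M=1,X=x)}\right\}\Big/\left\{\frac{P(D=1\mid X=x)}{P(D=0\mid X=x)}\right\}$$ is at least $1$, and hence $$\mathrm{CRR}(x)=\frac{\mathbb{E}[Y(1)\mid X=x]}{\mathbb{E}[Y(0)\mid X=x]}\ \ge\ \frac{\mathbb{E}[Y\mid D=1,M=1,X=x]}{\mathbb{E}[Y\mid D=0,M=1,X=x]}.$$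
   Context: $D$ is civilian race ($1$ = minority), $M$ detainment, $Y$ police use of force, $X$ covariates of a police–civilian encounter; $M(d)$ and $Y(d,m)$ are potential outcomes. Stochastic mediator monotonicity means that, on average given $X=x$, minorities are at least as likely to be detained as they would be were they of majority race. *)

From mathcomp Require Import all_boot all_order all_algebra.
Set Implicit Arguments. Unset Strict Implicit. Unset Printing Implicit Defensive.
Import Order.TTheory GRing.Theory Num.Theory.
Local Open Scope ring_scope.

Definition is_distr (R : realFieldType) (Omega : finType) (p : Omega -> R) :=
  (forall w, 0 <= p w) /\ \sum_w p w = 1.

Definition Pr (R : realFieldType) (Omega : finType) (p : Omega -> R)
  (A : Omega -> bool) : R := \sum_(w | A w) p w.

Definition cPr (R : realFieldType) (Omega : finType) (p : Omega -> R)
  (A B : Omega -> bool) : R := Pr p (fun w => A w && B w) / Pr p B.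

Definition cE (R : realFieldType) (Omega : finType) (p : Omega -> R)
  (f : Omega -> R) (B : Omega -> bool) : R :=
  (\sum_(w | B w) p w * f w) / Pr p B.

Definition rv (R : realFieldType) (Omega : finType) (Z : Omega -> bool)
  : Omega -> R := fun w => (Z w)%:R.

Definition Mobs (Omega : finType) (D : Omega -> bool)
  (Mpo : bool -> Omega -> bool) : Omega -> bool := fun w => Mpo (D w) w.
Definition Yobs (Omega : finType) (D : Omega -> bool)
  (Mpo : bool -> Omega -> bool) (Ypo : bool -> bool -> Omega -> bool)
  : Omega -> bool := fun w => Ypo (D w) (Mpo (D w) w) w.
Definition Ypo1 (Omega : finType) (Mpo : bool -> Omega -> bool)
  (Ypo : bool -> bool -> Omega -> bool) (d : bool) : Omega -> bool :=
  fun w => Ypo d (Mpo d w) w.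
Arguments rv {R Omega} Z _.

(** Conditioning on [X = x] is the same as passing to the conditional
   distribution, so it suffices to argue without covariates.  Write
   [pD d = P(D = d)], [pM d = P(M(d) = 1)] and [pY d = P(M(d) = 1, Y(d,1) = 1)].
   Since [Y(d,0) = 0] almost surely, [pY d = P(Y(d) = 1)], and on [{D = d}]
   the observed [M] and [Y] are [M(d)] and [Y(d, M(d))].  Ignorability then
   factors the observed joint probabilities:
   [P(D = d, M = 1) = pD d * pM d] and [P(D = d, M = 1, Y = 1) = pD d * pY d].
   Hence the bias factor equals [pM 1 / pM 0], which is at least [1] by
   mediator monotonicity, and the observed risk ratio equals
   [CRR * (pM 0 / pM 1) <= CRR]. *)

From mathcomp Require Import all_boot all_order all_algebra.
From mathcomp Require Import ring.
Set Implicit Arguments. Unset Strict Implicit. Unset Printing Implicit Defensive.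
Import Order.TTheory GRing.Theory Num.Theory.
Local Open Scope ring_scope.

Section FiniteProbability.
Variables (R : realFieldType) (Omega : finType) (p : Omega -> R).

Lemma Pr_ext (A B : Omega -> bool) : A =1 B -> Pr p A = Pr p B.
Proof. exact: eq_bigl. Qed.

Lemma Pr_split (A B : Omega -> bool) :
  Pr p A = Pr p (fun w => A w && B w) + Pr p (fun w => A w && ~~ B w).
Proof. exact: bigID. Qed.

Lemma Pr_split_eqb (A Z : Omega -> bool) :
  Pr p A = Pr p (fun w => A w && (Z w == true))
           + Pr p (fun w => A w && (Z w == false)).
Proof.
by rewrite (Pr_split A Z); congr (_ + _); apply: Pr_ext => w;
  rewrite ?eqb_id ?eqbF_neg.
Qed.

Lemma Pr_indep_marginal (A B Z : Omega -> bool) :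
  (forall c, Pr p (fun w => A w && B w && (Z w == c))
             = Pr p A * Pr p (fun w => B w && (Z w == c))) ->
  Pr p (fun w => A w && B w) = Pr p A * Pr p B.
Proof.
move=> indepABZ.
by rewrite (Pr_split_eqb (fun w => A w && B w) Z) (Pr_split_eqb B Z)
  !indepABZ mulrDr.
Qed.

Lemma cE_rv (Z B : Omega -> bool) : cE p (rv Z) B = cPr p Z B.
Proof.
rewrite /cE /cPr /Pr; congr (_ / _).
rewrite big_mkcond [RHS]big_mkcond; apply: eq_bigr => w _.
by rewrite /rv; case: (B w); case: (Z w); rewrite /= ?mulr1 ?mulr0 ?andbF.
Qed.

Definition condp (C : Omega -> bool) : Omega -> R :=
  fun w => p w * (C w)%:R / Pr p C.

Lemma Pr_condp (C A : Omega -> bool) : Pr (condp C) A = cPr p A C.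
Proof.
rewrite /Pr /cPr /condp -mulr_suml; congr (_ * _).
rewrite [RHS]big_mkcondr; apply: eq_bigr => w _.
by case: (C w); rewrite ?mulr1 ?mulr0.
Qed.

Lemma cPr_condp (C A B : Omega -> bool) : Pr p C != 0 ->
  cPr (condp C) A B = cPr p A (fun w => B w && C w).
Proof.
move=> C_neq0; rewrite {1}/cPr !Pr_condp /cPr.
rewrite (Pr_ext (A := fun w => (A w && B w) && C w)
                (B := fun w => A w && (B w && C w))); last by move=> w; rewrite andbA.
by rewrite invf_div mulrA divfK.
Qed.

Hypothesis p_ge0 : forall w, 0 <= p w.

Lemma Pr_ge0 (A : Omega -> bool) : 0 <= Pr p A.
Proof. exact: sumr_ge0. Qed.

Lemma Pr_andl_le (A B : Omega -> bool) : Pr p (fun w => A w && B w) <= Pr p A.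
Proof. by rewrite [leRHS](Pr_split A B) lerDl Pr_ge0. Qed.

Lemma Pr_and_null (N A : Omega -> bool) :
  Pr p N = 0 -> Pr p (fun w => N w && A w) = 0.
Proof. by move=> N0; apply/le_anti; rewrite Pr_ge0 andbT -N0 Pr_andl_le. Qed.

Lemma condp_ge0 (C : Omega -> bool) w : 0 <= condp C w.
Proof. by rewrite /condp divr_ge0 ?Pr_ge0 // mulr_ge0. Qed.

Lemma Pr_condp_null (C N : Omega -> bool) : Pr p N = 0 -> Pr (condp C) N = 0.
Proof. by move=> N0; rewrite Pr_condp /cPr Pr_and_null // mul0r. Qed.

End FiniteProbability.

Arguments Pr_ext {R Omega p A B}.

Section UnconditionalBounds.
Variables (R : realFieldType) (Omega : finType) (q : Omega -> R).
Variables (D : Omega -> bool) (Mpo : bool -> Omega -> bool).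
Variable Ypo : bool -> bool -> Omega -> bool.

Let M := Mobs D Mpo.
Let Y := Yobs D Mpo Ypo.
(* The event [{D = d}], chosen so that [D_eq true] and [D_eq false] reduce to
   [D] and [~~ D], the forms in which the observed quantities are stated. *)
Let D_eq d w := if d then D w else ~~ D w.
Let pD d := Pr q (D_eq d).
Let pM d := Pr q (Mpo d).
Let pY d := Pr q (fun w => Mpo d w && Ypo d true w).

Hypothesis q_ge0 : forall w, 0 <= q w.
Hypothesis Y_d0_null : forall d, Pr q (Ypo d false) = 0.
Hypothesis D_indep : forall d a b c,
  Pr q (fun w => (D w == a) && (Mpo d w == b) && (Ypo d true w == c))
  = Pr q (fun w => D w == a) * Pr q (fun w => (Mpo d w == b) && (Ypo d true w == c)).
Hypothesis D_pos : forall d, 0 < Pr q (fun w => D w == d).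
Hypothesis M_pos : forall d, 0 < cPr q M (fun w => D w == d).
Hypothesis Y_pos : 0 < cPr q Y (fun w => ~~ D w && M w).
Hypothesis M_mono : Pr q (Mpo false) <= Pr q (Mpo true).

Lemma D_eqE d w : D_eq d w = (D w == d).
Proof. by case: d; rewrite /D_eq ?eqb_id ?eqbF_neg. Qed.

Lemma pD_gt0 d : 0 < pD d.
Proof. by rewrite /pD (Pr_ext (D_eqE d)); apply: D_pos. Qed.

Lemma Pr_D_M_Y d a c :
  Pr q (fun w => D_eq a w && Mpo d w && (Ypo d true w == c))
  = pD a * Pr q (fun w => Mpo d w && (Ypo d true w == c)).
Proof.
rewrite /pD (Pr_ext (D_eqE a)).
rewrite (Pr_ext (B := fun w => (D w == a) && (Mpo d w == true) && (Ypo d true w == c))).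
  by rewrite D_indep; congr (_ * _); apply: Pr_ext => w; rewrite eqb_id.
by move=> w; rewrite D_eqE eqb_id.
Qed.

Lemma Pr_D_obsM d : Pr q (fun w => D_eq d w && M w) = pD d * pM d.
Proof.
rewrite (Pr_ext (B := fun w => D_eq d w && Mpo d w)).
  exact: (Pr_indep_marginal (Z := Ypo d true) (Pr_D_M_Y d d)).
by move=> w; rewrite /M /Mobs /D_eq; case: d; case: (D w).
Qed.

Lemma Pr_D_obsMY d : Pr q (fun w => Y w && (D_eq d w && M w)) = pD d * pY d.
Proof.
rewrite (Pr_ext (B := fun w => D_eq d w && Mpo d w && (Ypo d true w == true))).
  by rewrite Pr_D_M_Y; congr (_ * _); apply: Pr_ext => w; rewrite eqb_id.
move=> w; rewrite /Y /M /Yobs /Mobs /D_eq eqb_id.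
by case: d; case: (D w); case: (Mpo _ w); rewrite /= ?andbT ?andbF.
Qed.

Lemma Pr_obsM : Pr q M = pD true * pM true + pD false * pM false.
Proof.
rewrite (Pr_split q M D) -!Pr_D_obsM.
by congr (_ + _); apply: Pr_ext => w; rewrite andbC.
Qed.

Lemma Pr_Ypo1 d : Pr q (Ypo1 Mpo Ypo d) = pY d.
Proof.
rewrite (Pr_split q _ (Mpo d)).
rewrite [X in _ + X](Pr_ext (B := fun w => Ypo d false w && ~~ Mpo d w)); last first.
  by move=> w; rewrite /Ypo1; case: (Mpo d w); rewrite ?andbF.
rewrite (Pr_and_null q_ge0 _ (Y_d0_null d)) addr0; apply: Pr_ext => w.
by rewrite /Ypo1; case: (Mpo d w); rewrite ?andbT ?andbF.
Qed.

Lemma pM_gt0 d : 0 < pM d.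
Proof.
have PrMD : Pr q (fun w => M w && (D w == d)) = pD d * pM d.
  by rewrite -Pr_D_obsM; apply: Pr_ext => w; rewrite D_eqE andbC.
have PrD : Pr q (fun w => D w == d) = pD d by apply: Pr_ext => w; rewrite D_eqE.
have := M_pos d; rewrite /cPr PrMD PrD mulrAC divff ?mul1r //.
exact: lt0r_neq0 (pD_gt0 d).
Qed.

Lemma pY0_gt0 : 0 < pY false.
Proof.
move: Y_pos; rewrite /cPr (Pr_D_obsMY false) (Pr_D_obsM false).
by rewrite pmulr_lgt0 ?pmulr_rgt0 ?pD_gt0 // invr_gt0 mulr_gt0 ?pD_gt0 ?pM_gt0.
Qed.

Lemma bias_factorE :
  cPr q D M / cPr q (fun w => ~~ D w) M / (Pr q D / Pr q (fun w => ~~ D w))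
  = pM true / pM false.
Proof.
rewrite /cPr (Pr_D_obsM true) (Pr_D_obsM false) -/(pD true) -/(pD false).
have PrM_neq0 : Pr q M != 0.
  by rewrite Pr_obsM gt_eqF // addr_gt0 // mulr_gt0 ?pD_gt0 ?pM_gt0.
by field; rewrite PrM_neq0 !lt0r_neq0 ?pD_gt0 ?pM_gt0.
Qed.

Lemma bias_factor_ge1 :
  1 <= cPr q D M / cPr q (fun w => ~~ D w) M / (Pr q D / Pr q (fun w => ~~ D w)).
Proof. by rewrite bias_factorE ler_pdivlMr ?pM_gt0 // mul1r. Qed.

Lemma observed_risk_ratioE :
  cPr q Y (fun w => D w && M w) / cPr q Y (fun w => ~~ D w && M w)
  = pY true / pY false * (pM false / pM true).
Proof.
rewrite /cPr (Pr_D_obsMY true) (Pr_D_obsMY false) (Pr_D_obsM true) (Pr_D_obsM false).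
by field; rewrite !lt0r_neq0 ?pD_gt0 ?pM_gt0 ?pY0_gt0.
Qed.

Lemma observed_risk_ratio_le_crr :
  cPr q Y (fun w => D w && M w) / cPr q Y (fun w => ~~ D w && M w)
  <= Pr q (Ypo1 Mpo Ypo true) / Pr q (Ypo1 Mpo Ypo false).
Proof.
rewrite observed_risk_ratioE !Pr_Ypo1.
rewrite ler_piMr ?divr_ge0 ?Pr_ge0 //.
by rewrite ler_pdivrMr ?pM_gt0 // mul1r.
Qed.

End UnconditionalBounds.

Theorem mainTheorem7 (R : realFieldType) (Omega : finType) (p : Omega -> R)
  (XT : eqType) (X : Omega -> XT) (x : XT)
  (D : Omega -> bool) (Mpo : bool -> Omega -> bool)
  (Ypo : bool -> bool -> Omega -> bool) :
  is_distr p ->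
  let Xx := fun w => X w == x in
  let M := Mobs D Mpo in
  let Y := Yobs D Mpo Ypo in
  (* Y(d,0) = 0 almost surely *)
  (forall d, Pr p (fun w => Ypo d false w) = 0) ->
  (* D independent of (M(d), Y(d,1)) given X = x *)
  (forall d a b c,
     cPr p (fun w => (D w == a) && (Mpo d w == b) && (Ypo d true w == c)) Xx
     = cPr p (fun w => D w == a) Xx *
       cPr p (fun w => (Mpo d w == b) && (Ypo d true w == c)) Xx) ->
  (* positivity *)
  (forall d, 0 < cPr p (fun w => D w == d) Xx) ->
  (forall d, 0 < cPr p M (fun w => (D w == d) && Xx w)) ->
  0 < cE p (rv Y) (fun w => ~~ D w && M w && Xx w) ->
  (* stochastic mediator monotonicity *)
  cE p (rv (Mpo true)) Xx >= cE p (rv (Mpo false)) Xx ->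
  (cPr p D (fun w => M w && Xx w) / cPr p (fun w => ~~ D w) (fun w => M w && Xx w))
    / (cPr p D Xx / cPr p (fun w => ~~ D w) Xx) >= 1
  /\
  cE p (rv (Ypo1 Mpo Ypo true)) Xx / cE p (rv (Ypo1 Mpo Ypo false)) Xx
    >= cE p (rv Y) (fun w => D w && M w && Xx w)
       / cE p (rv Y) (fun w => ~~ D w && M w && Xx w).
Proof.
move=> [p_ge0 _] Xx M Y Y_d0_null D_indep D_pos M_pos Y_pos M_mono.
have PrX_neq0 : Pr p Xx != 0.
  by apply: contraTneq (D_pos true); rewrite /cPr => ->; rewrite invr0 mulr0 ltxx.
rewrite !cE_rv in Y_pos M_mono *.
rewrite -!(cPr_condp _ _ PrX_neq0) -!(Pr_condp p Xx) in Y_pos M_mono *.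
set q := condp p Xx.
have q_ge0 : forall w, 0 <= q w := condp_ge0 p_ge0 Xx.
have Y_d0_null_q d : Pr q (Ypo d false) = 0.
  exact: Pr_condp_null p_ge0 _ _ (Y_d0_null d).
have D_pos_q d : 0 < Pr q (fun w => D w == d) by rewrite Pr_condp; apply: D_pos.
have M_pos_q d : 0 < cPr q M (fun w => D w == d).
  by rewrite cPr_condp //; apply: M_pos.
split; [apply: bias_factor_ge1 | apply: observed_risk_ratio_le_crr] => //;
  by move=> d a b c; rewrite !Pr_condp; apply: D_indep.
Qed.
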